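(* Let $\rho$ be an $n$-qubit state and let $A_1,A_2,\dots\in\mathrm{GL}(n,2)$ be queried gauges, $A_r$ with columns $\mathbf{a}_{r,1},\dots,\mathbf{a}_{r,n}$. Let $Q_0=\emptyset$, $Q_t=\{\mathbf{a}_{r,i}:r\le t,\ i\le n\}$, $\mathcal{F}_t=\{p\in\Delta(\mathbb{F}_2^n):\widehat p(\mathbf{u})=\mu_\rho(\mathbf{u})\ \forall\mathbf{u}\in Q_t\}$, $W_t=\max_{p\in\mathcal{F}_t}p(\mathbf{0})-\min_{p\in\mathcal{F}_t}p(\mathbf{0})$, and $m_t=|(\mathbb{F}_2^n\setminus\{\mathbf{0}\})\setminus Q_t|$. (i) For every state $\rho$ and every sequence of queried gauges, $W_t\le\min\{1,\,2m_t/2^n\}$. (ii) Suppose the gauges are chosen by a randomized gauge policy (each $A_{t+1}$ drawn from a distribution depending on the history $\mathcal{H}_t$ through round $t$), and for some $\alpha\in[0,1]$, $\mathbb{P}(\mathbf{u}\in Q_{t+1}\mid\mathcal{H}_t)\ge\alpha$ for every $t\ge0$ and every $\mathbf{u}\in(\mathbb{F}_2^n\setminus\{\mathbf{0}\})\setminus Q_t$. Then $\mathbb{E}[W_t]\le\frac{2^n-1}{2^{n-1}}(1-\alpha)^t$. (iii) Under the uniform random gauge policy (each $A_{t+1}$ uniform on $\mathrm{GL}(n,2)$, independent of the history), one may take $\alpha=n/(2^n-1)$, and $$\mathbb{E}[W_t]\le\frac{2^n-1}{2^{n-1}}\Big(1-\frac{n}{2^n-1}\Big)^t\le 2\exp\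!\Big(-\frac{nt}{2^n-1}\Big).$$
   Context: Setting: $|\psi\rangle$ is an $n$-qubit stabilizer state whose stabilizer group is generated by independent commuting Pauli operators $g_1,\dots,g_n$; $g(\mathbf{u})=\prod_j g_j^{u_j}$ for $\mathbf{u}\in\mathbb{F}_2^n$. Syndrome projectors $\Pi_{\mathbf{s}}=2^{-n}\prod_j(I+(-1)^{s_j}g_j)$ are orthogonal rank-one projectors summing to identity with $\Pi_{\mathbf{0}}=|\psi\rangle\langle\psi|$. $p_\rho(\mathbf{s})=\mathrm{tr}(\rho\Pi_{\mathbf{s}})$, $\mu_\rho(\mathbf{u})=\mathrm{tr}(\rho g(\mathbf{u}))=\widehat{p_\rho}(\mathbf{u})$ with Walsh transform $\widehat p(\mathbf{u})=\sum_{\mathbf{s}}(-1)^{\mathbf{u}\cdot\mathbf{s}}p(\mathbf{s})$ (mod-2 inner product). $\Delta(\mathbb{F}_2^n)$ is the set of probability distributions on $\mathbb{F}_2^n$; $\mathrm{GL}(n,2)$ the invertible binary $n\times n$ matrices. *)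

From HB Require Import structures.
From mathcomp Require Import all_boot all_order all_algebra.
From mathcomp Require Import complex.
From mathcomp Require Import classical_sets reals sequences exp.
Set Implicit Arguments. Unset Strict Implicit. Unset Printing Implicit Defensive.
Import Order.TTheory GRing.Theory Num.Theory.
Local Open Scope ring_scope.
Local Open Scope classical_set_scope.

Definition vecF2 (n : nat) : finType := 'cV['F_2]_n.

Definition dotF2 n (u s : vecF2 n) : 'F_2 := (u^T *m s) 0 0.

Definition sgn_dot (K : pzRingType) n (u s : vecF2 n) : K :=
  if dotF2 u s == 0 then 1 else -1.

Definition GL2 (n : nat) : finType := {A : 'M['F_2]_n | A \in unitmx}.

Definition walsh (R : realType) n (p : vecF2 n -> R) (u : vecF2 n) : R :=
  \sum_(s : vecF2 n) sgn_dot R u s * p s.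

Definition Qset n (h : seq (GL2 n)) : {set vecF2 n} :=
  \bigcup_(A <- h) [set col i (val A) | i : 'I_n].

Definition mcount n (Q : {set vecF2 n}) : nat :=
  #|[set u : vecF2 n | u != 0] :\: Q|.

Definition cconjT (R : realType) m k (M : 'M[R[i]]_(m, k)) : 'M[R[i]]_(k, m) :=
  (map_mx (fun z => z^*) M)^T.

Definition is_state (R : realType) n (rho : 'M[R[i]]_(2 ^ n)) : Prop :=
  [/\ cconjT rho = rho,
      (forall v : 'cV[R[i]]_(2 ^ n), 0 <= ((cconjT v *m rho *m v) 0 0)) &
      \tr rho = 1].

Definition gprod (R : realType) n (g : 'I_n -> 'M[R[i]]_(2 ^ n)) (u : vecF2 n)
  : 'M[R[i]]_(2 ^ n) :=
  \prod_(j < n) (if u j 0 == 1 then g j else 1).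

Definition syndrome_proj (R : realType) n (g : 'I_n -> 'M[R[i]]_(2 ^ n)) (s : vecF2 n)
  : 'M[R[i]]_(2 ^ n) :=
  ((2 ^ n)%:R)^-1 *: \prod_(j < n) (1 + (if s j 0 == 0 then 1 else -1) *: g j).

Definition stabilizer_generators (R : realType) n (g : 'I_n -> 'M[R[i]]_(2 ^ n)) : Prop :=
  [/\ (forall j, cconjT (g j) = g j),
      (forall j, g j *m g j = 1%:M),
      (forall j k, g j *m g k = g k *m g j) &
      (forall s, \rank (syndrome_proj g s) = 1%N)].

Definition mu (R : realType) n (rho : 'M[R[i]]_(2 ^ n)) (g : 'I_n -> 'M[R[i]]_(2 ^ n))
  (u : vecF2 n) : R[i] := \tr (rho *m gprod g u).

Definition is_distr (R : realType) (T : finType) (p : T -> R) : Prop :=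
  (forall x, 0 <= p x) /\ \sum_x p x = 1.

Definition feasible (R : realType) n (rho : 'M[R[i]]_(2 ^ n))
  (g : 'I_n -> 'M[R[i]]_(2 ^ n)) (Q : {set vecF2 n}) : set (vecF2 n -> R) :=
  [set p | is_distr p /\ (forall u, u \in Q -> ((walsh p u)%:C)%C = mu rho g u)].

Definition width (R : realType) n (rho : 'M[R[i]]_(2 ^ n))
  (g : 'I_n -> 'M[R[i]]_(2 ^ n)) (Q : {set vecF2 n}) : R :=
  sup [set p 0 | p in feasible rho g Q] - inf [set p 0 | p in feasible rho g Q].

(* A policy maps a history of past gauges (most recent first) to a distribution
   on GL(n,2) for the next gauge. *)
Definition policy (R : realType) n := seq (GL2 n) -> GL2 n -> R.

Definition is_policy (R : realType) n (pol : policy R n) : Prop :=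
  forall h, is_distr (pol h).

Fixpoint hprob (R : realType) n (pol : policy R n) (h : seq (GL2 n)) : R :=
  if h is A :: h' then pol h' A * hprob pol h' else 1.

Definition expected_width (R : realType) n (pol : policy R n) (rho : 'M[R[i]]_(2 ^ n))
  (g : 'I_n -> 'M[R[i]]_(2 ^ n)) (t : nat) : R :=
  \sum_(h : t.-tuple (GL2 n)) hprob pol h * width rho g (Qset h).

Definition coverage (R : realType) n (pol : policy R n) (alpha : R) : Prop :=
  forall h : seq (GL2 n), 0 < hprob pol h ->
  forall u : vecF2 n, u != 0 -> u \notin Qset h ->
  alpha <= \sum_(A : GL2 n | u \in Qset (A :: h)) pol h A.

Definition uniform_policy (R : realType) n : policy R n :=
  fun _ _ => (#|GL2 n|%:R)^-1.

(* Every feasible p satisfies p(0) = 2^-n sum_u p^(u), with p^(0) = 1 and p^(u)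
   prescribed for u in Q_t; the at most m_t remaining coefficients lie in
   [-1, 1], so two feasible distributions differ at 0 by at most 2 m_t / 2^n.
   This bound uses nothing about rho and g.  Summing over nonzero u,
   E[W_t] <= 2^(1-n) sum_u P(u \notin Q_t), and the coverage hypothesis makes
   each P(u \notin Q_t) shrink by a factor 1 - alpha per round.  For uniform
   gauges, GL(n,2) acts transitively on nonzero vectors, so each column of A is
   uniform on them, and the n columns are distinct: alpha = n / (2^n - 1). *)

From HB Require Import structures.
From mathcomp Require Import all_boot all_order all_algebra.
From mathcomp Require Import complex.
From mathcomp Require Import classical_sets reals sequences exp.
From mathcomp Require Import lra.
Import Order.TTheory GRing.Theory Num.Theory.
Local Open Scope ring_scope.

Set Implicit Arguments. Unset Strict Implicit. Unset Printing Implicit Defensive.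

Lemma F2_cases (x : 'F_2) : x = 0 \/ x = 1.
Proof. by case: x => [[|[|m]] Hm] //; [left | right]; apply/eqP. Qed.

Lemma card_vecF2 n : #|vecF2 n| = (2 ^ n)%N.
Proof. by rewrite /vecF2 card_mx card_Fp // muln1. Qed.

Lemma card_vecF2_neq0 n : #|[pred u : vecF2 n | u != 0]| = (2 ^ n - 1)%N.
Proof. by rewrite (cardC1 (0 : vecF2 n)) card_vecF2 subn1. Qed.

Lemma dotF2_addl_delta n (u s : vecF2 n) k :
  dotF2 (u + delta_mx k 0) s = dotF2 u s + s k 0.
Proof.
rewrite /dotF2 linearD /= mulmxDl mxE; congr (_ + _).
by rewrite trmx_delta -rowE mxE.
Qed.

Lemma sum_sgn_dot (K : numDomainType) n (s : vecF2 n) :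
  \sum_(u : vecF2 n) sgn_dot K u s = if s == 0 then (2 ^ n)%:R else 0.
Proof.
have [->|s_neq0] := eqVneq s 0.
  under eq_bigr do rewrite /sgn_dot /dotF2 mulmx0 mxE eqxx.
  by rewrite sumr_const card_vecF2.
have /existsP[k /eqP sk1] : [exists k, s k 0 == 1].
  apply: contraNT s_neq0; rewrite negb_exists => /forallP s0.
  apply/eqP/matrixP => i j; rewrite !mxE (ord1 j).
  by have := s0 i; case: (F2_cases (s i 0)) => ->.
set S := \sum_u _.
(* u |-> u + e_k flips the sign of every term *)
have SN : S = - S.
  rewrite {1}/S (reindex_inj (addIr (delta_mx k 0 : vecF2 n))) /= -sumrN.
  apply: eq_bigr => u _; rewrite /sgn_dot dotF2_addl_delta sk1.
  by case: (F2_cases (dotF2 u s)) => ->; rewrite ?opprK.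
by apply/eqP; rewrite -[_ == 0](mulrn_eq0 S 2) mulr2n {1}SN addNr.
Qed.

Lemma walsh_sum (R : realType) n (p : vecF2 n -> R) :
  \sum_(u : vecF2 n) walsh p u = (2 ^ n)%:R * p 0.
Proof.
rewrite /walsh exchange_big /=.
under eq_bigr do rewrite -mulr_suml sum_sgn_dot.
rewrite (bigD1 0) //= eqxx big1 ?addr0 1?mulrC // => s /negbTE ->.
by rewrite mul0r.
Qed.

Lemma walsh_distr0 (R : realType) n (p : vecF2 n -> R) :
  is_distr p -> walsh p 0 = 1.
Proof.
case=> _ <-; apply: eq_bigr => s _.
by rewrite /sgn_dot /dotF2 trmx0 mul0mx mxE eqxx mul1r.
Qed.

Lemma walsh_distr_bound (R : realType) n (p : vecF2 n -> R) u :
  is_distr p -> -1 <= walsh p u <= 1.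
Proof.
case=> p_ge0 p_sum1; rewrite -ler_norml -p_sum1.
apply: le_trans (ler_norm_sum _ _ _) _; apply: ler_sum => s _.
rewrite normrM (ger0_norm (p_ge0 s)) /sgn_dot.
by case: ifP => _; rewrite ?normrN normr1 mul1r.
Qed.

Lemma distr_le1 (R : realType) (T : finType) (p : T -> R) x :
  is_distr p -> p x <= 1.
Proof.
case=> p_ge0 <-; rewrite (bigD1 x) //= lerDl.
by apply: sumr_ge0 => y _; apply: p_ge0.
Qed.

Lemma mcountE (R : realType) n (Q : {set vecF2 n}) :
  (mcount Q)%:R = \sum_(u : vecF2 n | u != 0) (u \notin Q)%:R :> R.
Proof.
rewrite /mcount -sum1_card natr_sum big_mkcond [RHS]big_mkcond /=.
by apply: eq_bigr => u _; rewrite !inE; case: (u \in Q); case: (u != 0).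
Qed.

Lemma distr0_sub_le (R : realType) n (Q : {set vecF2 n}) (p q : vecF2 n -> R) :
  is_distr p -> is_distr q -> {in Q, walsh p =1 walsh q} ->
  p 0 - q 0 <= 2 * (mcount Q)%:R / (2 ^ n)%:R.
Proof.
move=> dp dq pq_Q.
rewrite ler_pdivlMr ?ltr0n ?expn_gt0 // mulrC mulrBr -!walsh_sum -sumrB.
set S := [set u : vecF2 n | u != 0] :\: Q.
rewrite (bigID (mem S)) /= [X in _ + X]big1 ?addr0; last first.
  move=> u; rewrite !inE negb_and !negbK => /orP[uQ | /eqP ->].
    by rewrite pq_Q // subrr.
  by rewrite !walsh_distr0 // subrr.
apply: le_trans (_ : \sum_(u in S) (2 : R) <= _).
  apply: ler_sum => u _.
  by have := walsh_distr_bound u dp; have := walsh_distr_bound u dq; lra.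
by rewrite sumr_const mulr_natr.
Qed.

Lemma sup_sub_inf_le (R : realType) (E : set R) (B : R) : 0 <= B ->
  (forall x y, E x -> E y -> x - y <= B) -> sup E - inf E <= B.
Proof.
move=> B_ge0 EB; have [E0 | /set0P[y0 Ey0]] := eqVneq E set0.
  by rewrite E0 sup0 inf0 subrr.
have supE_le y : E y -> sup E <= B + y.
  move=> Ey; apply: ge_sup; first by exists y.
  by move=> x Ex; have := EB x y Ex Ey; lra.
suff : sup E - B <= inf E by lra.
by apply: lb_le_inf; [exists y0 | move=> y Ey; have := supE_le y Ey; lra].
Qed.

Lemma width_le (R : realType) n (rho : 'M[R[i]]_(2 ^ n))
    (g : 'I_n -> 'M[R[i]]_(2 ^ n)) (Q : {set vecF2 n}) :
  width rho g Q <= Num.min 1 (2 * (mcount Q)%:R / (2 ^ n)%:R).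
Proof.
apply: sup_sub_inf_le => [|_ _ [p [dp fp] <-] [q [dq fq] <-]].
  by rewrite le_min ler01 /= !mulr_ge0 ?invr_ge0 ?ler0n.
rewrite le_min; apply/andP; split.
  by have := distr_le1 0 dp; have := dq.1 0; lra.
apply: distr0_sub_le => // u uQ.
by apply: (@complexI R); rewrite fp ?fq.
Qed.

Lemma sum_tupleS (V : nmodType) (T : finType) t (F : seq T -> V) :
  \sum_(h : t.+1.-tuple T) F h = \sum_(h : t.-tuple T) \sum_(A : T) F (A :: h).
Proof.
rewrite pair_big /= (reindex (fun x : t.-tuple T * T => [tuple of x.2 :: x.1])) //=.
exists (fun h : t.+1.-tuple T => (behead_tuple h, thead h)).
  by move=> [h A] _ /=; congr (_, _); apply: val_inj.
by move=> h _; rewrite [RHS]tuple_eta; apply: val_inj.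
Qed.

Lemma sum_tuple0 (V : nmodType) (T : finType) (F : seq T -> V) :
  \sum_(h : 0.-tuple T) F h = F [::].
Proof. by rewrite (big_pred1 [tuple]) // => h /=; apply/esym/eqP/tuple0. Qed.

Lemma Qset_cons n (A : GL2 n) h :
  Qset (A :: h) = [set col i (val A) | i : 'I_n] :|: Qset h.
Proof. by rewrite /Qset big_cons. Qed.

Section Policy.
Variables (R : realType) (n : nat) (pol : policy R n).
Hypothesis pol_distr : is_policy pol.

Lemma hprob_ge0 h : 0 <= hprob pol h.
Proof. by elim: h => [|A h IH] //=; rewrite mulr_ge0 // (pol_distr h).1. Qed.

Definition miss_prob t (u : vecF2 n) : R :=
  \sum_(h : t.-tuple (GL2 n)) hprob pol h * (u \notin Qset h)%:R.

Lemma miss_prob0 u : miss_prob 0 u = 1.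
Proof.
rewrite /miss_prob (sum_tuple0 (fun h => hprob pol h * (u \notin Qset h)%:R)).
by rewrite /Qset big_nil inE mulr1.
Qed.

Variable alpha : R.
Hypothesis pol_coverage : coverage pol alpha.

Lemma cond_miss_le h u : 0 < hprob pol h -> u != 0 ->
  \sum_A pol h A * (u \notin Qset (A :: h))%:R <= (1 - alpha) * (u \notin Qset h)%:R.
Proof.
move=> hp_gt0 u_neq0; have [uQ | uQ] := boolP (u \in Qset h).
  by rewrite mulr0 big1 // => A _; rewrite Qset_cons inE uQ orbT mulr0.
have hit_ge := pol_coverage hp_gt0 u_neq0 uQ.
have total_mass : 1 = \sum_(A | u \in Qset (A :: h)) pol h A
                    + \sum_(A | u \notin Qset (A :: h)) pol h A.
  by rewrite -(pol_distr h).2 (bigID (fun A => u \in Qset (A :: h))).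
have -> : \sum_A pol h A * (u \notin Qset (A :: h))%:R
          = \sum_(A | u \notin Qset (A :: h)) pol h A.
  by rewrite [RHS]big_mkcond; apply: eq_bigr => A _; case: ifP; rewrite ?mulr1 ?mulr0.
by rewrite mulr1; lra.
Qed.

Lemma miss_probS t u : u != 0 -> miss_prob t.+1 u <= (1 - alpha) * miss_prob t u.
Proof.
move=> u_neq0; rewrite /miss_prob mulr_sumr.
rewrite (sum_tupleS t (fun h => hprob pol h * (u \notin Qset h)%:R)).
apply: ler_sum => h _ /=.
under eq_bigr do rewrite mulrAC.
rewrite -mulr_suml [leRHS]mulrCA [leRHS]mulrC.
have [hp0 | hp_neq0] := eqVneq (hprob pol h) 0; first by rewrite hp0 !mulr0.
apply: ler_wpM2r; first exact: hprob_ge0.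
by apply: cond_miss_le; rewrite // lt0r hp_neq0 hprob_ge0.
Qed.

Lemma miss_prob_le t u : alpha <= 1 -> u != 0 -> miss_prob t u <= (1 - alpha) ^+ t.
Proof.
move=> alpha_le1 u_neq0; elim: t => [|t IH].
  by rewrite miss_prob0 expr0.
apply: le_trans (miss_probS t u_neq0) _.
by rewrite exprS ler_wpM2l // subr_ge0.
Qed.

Lemma expected_width_le_miss rho g t :
  expected_width pol rho g t
    <= 2 / (2 ^ n)%:R * \sum_(u : vecF2 n | u != 0) miss_prob t u.
Proof.
rewrite /miss_prob exchange_big mulr_sumr /=; apply: ler_sum => h _.
rewrite -mulr_sumr mulrCA -mcountE ler_wpM2l ?hprob_ge0 //.
by rewrite mulrAC; apply: le_trans (width_le rho g (Qset h)) _; rewrite ge_min lexx orbT.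
Qed.

Lemma expected_width_le rho g t : alpha <= 1 ->
  expected_width pol rho g t <= (2 ^ n - 1)%:R / (2 ^ n.-1)%:R * (1 - alpha) ^+ t.
Proof.
move=> alpha_le1; apply: le_trans (expected_width_le_miss rho g t) _.
apply: le_trans (_ : 2 / (2 ^ n)%:R * ((2 ^ n - 1)%:R * (1 - alpha) ^+ t) <= _).
  rewrite ler_wpM2l ?divr_ge0 ?ler0n // mulr_natl -card_vecF2_neq0 -sumr_const.
  by apply: ler_sum => u u_neq0; apply: miss_prob_le.
rewrite mulrA; apply: ler_wpM2r.
  by rewrite exprn_ge0 ?subr_ge0.
case: (n) => [|m]; first by rewrite expn0 subnn mulr0 mul0r.
by rewrite [in X in X * _]expnS natrM invfM mulrA divff ?mul1r 1?mulrC ?pnatr_eq0.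
Qed.

End Policy.

Lemma unitmx_ker n (A : 'M['F_2]_n) (x : vecF2 n) : A \in unitmx -> A *m x = 0 -> x = 0.
Proof. by move=> A_unit Ax0; rewrite -(mulKmx A_unit x) Ax0 mulmx0. Qed.

Lemma GL2_col_neq0 n (A : GL2 n) i : col i (val A) != 0.
Proof.
apply/eqP; rewrite colE => /(unitmx_ker (valP A))/matrixP/(_ i 0).
by rewrite !mxE !eqxx.
Qed.

Lemma GL2_col_inj n (A : GL2 n) : injective (fun i => col i (val A)).
Proof.
move=> i j eq_col; apply/eqP; apply: contraT => neq_ij.
have : val A *m (delta_mx i 0 - delta_mx j 0 : vecF2 n) = 0.
  by rewrite mulmxBr -!colE eq_col subrr.
move/(unitmx_ker (valP A))/matrixP/(_ i 0)/eqP.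
by rewrite !mxE !eqxx (negbTE neq_ij) subr0 oner_eq0.
Qed.

Lemma vecF2_ebase n (u : vecF2 n) : u != 0 ->
  exists2 L : 'M['F_2]_n, L \in unitmx & u = L *m pid_mx 1.
Proof.
move=> u_neq0; exists (col_ebase u); first exact: col_ebase_unit.
have rank_u : \rank u = 1%N.
  by apply/eqP; rewrite eqn_leq rank_leq_col lt0n mxrank_eq0.
(* a unit 1 x 1 matrix over F_2 is the identity *)
have row_ebase1 : row_ebase u = 1%:M.
  have := row_ebase_unit u; rewrite [row_ebase u]mx11_scalar unitmxE det_scalar1.
  by case: (F2_cases (row_ebase u 0 0)) => ->; rewrite ?unitr0.
by rewrite -{1}(mulmx_ebase u) rank_u row_ebase1 mulmx1.
Qed.

Lemma GL2_transitive n (u v : vecF2 n) : u != 0 -> v != 0 ->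
  exists2 M : 'M['F_2]_n, M \in unitmx & M *m u = v.
Proof.
move=> /vecF2_ebase[Lu Lu_unit ->] /vecF2_ebase[Lv Lv_unit ->].
exists (Lv *m invmx Lu); first by rewrite unitmx_mul Lv_unit unitmx_inv.
by rewrite mulmxA mulmxKV.
Qed.

Definition col_fiber n (i : 'I_n) (u : vecF2 n) : {set GL2 n} :=
  [set A : GL2 n | col i (val A) == u].

Lemma col_fiber_le n i (u v : vecF2 n) : u != 0 -> v != 0 ->
  (#|col_fiber i u| <= #|col_fiber i v|)%N.
Proof.
move=> u_neq0 v_neq0; have [M M_unit Mu] := GL2_transitive u_neq0 v_neq0.
pose mulM (A : GL2 n) : GL2 n :=
  exist _ (M *m val A) (etrans (unitmx_mul M (val A)) (introT andP (conj M_unit (valP A)))).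
have mulM_inj : injective mulM.
  move=> A B /(congr1 val)/= eqMAB; apply: val_inj.
  by rewrite -(mulKmx M_unit (val A)) eqMAB mulKmx.
rewrite -(card_imset (col_fiber i u) mulM_inj); apply: subset_leq_card.
apply/fintype.subsetP => _ /imsetP[A + ->]; rewrite !inE => /eqP colA.
by rewrite /= colE -mulmxA -colE colA Mu.
Qed.

Lemma card_col_fiber n (i : 'I_n) (u : vecF2 n) : u != 0 ->
  ((2 ^ n - 1) * #|col_fiber i u|)%N = #|GL2 n|.
Proof.
move=> u_neq0; have sum_fibers : (\sum_v #|col_fiber i v|)%N = #|GL2 n|.
  rewrite -sum1_card (partition_big (fun A : GL2 n => col i (val A)) predT) //=.
  by apply: eq_bigr => v _; rewrite -sum1_card; apply: eq_bigl => A; rewrite inE.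
rewrite -sum_fibers (bigD1 0) //=.
have -> : #|col_fiber i 0| = 0%N.
  apply/eqP; rewrite cards_eq0; apply/eqP/setP => A.
  by rewrite !inE (negbTE (GL2_col_neq0 A i)).
rewrite add0n (eq_bigr (fun _ => #|col_fiber i u|)) ?sum_nat_const ?card_vecF2_neq0 //.
by move=> v v_neq0; apply/eqP; rewrite eqn_leq !col_fiber_le.
Qed.

Lemma card_col_fiberE n (i : 'I_n) (u : vecF2 n) :
  #|col_fiber i u| = (\sum_(A : GL2 n) (col i (val A) == u))%N.
Proof.
by rewrite -sum1_card big_mkcond; apply: eq_bigr => A _; rewrite inE; case: eqP.
Qed.

Lemma sum_col_eq n (A : GL2 n) (u : vecF2 n) :
  (\sum_(i < n) (col i (val A) == u))%N = (u \in [set col i (val A) | i : 'I_n]).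
Proof.
case: imsetP => [[i0 _ ->] | no_col]; last first.
  rewrite big1 // => i _; apply/eqP; rewrite eqb0.
  by apply: contra_notN no_col => /eqP <-; exists i.
rewrite (bigD1 i0) //= eqxx big1 ?addn0 // => j /negbTE neq_j.
by apply/eqP; rewrite eqb0 (inj_eq (@GL2_col_inj n A)) neq_j.
Qed.

Lemma card_GL2_gt0 n : (0 < #|GL2 n|)%N.
Proof. by apply/card_gt0P; exists (exist _ (1%:M : 'M['F_2]_n) (unitmx1 _ _)). Qed.

Lemma uniform_is_policy (R : realType) n : is_policy (@uniform_policy R n).
Proof.
move=> h; split=> [A | ]; first by rewrite invr_ge0 ler0n.
by rewrite sumr_const -[LHS]mulr_natr mulVf // pnatr_eq0 -lt0n card_GL2_gt0.
Qed.

Lemma vecF2_dim_gt0 n (u : vecF2 n) : u != 0 -> (0 < n)%N.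
Proof. by case: n u => // u; rewrite flatmx0 eqxx. Qed.

Lemma exp2_sub1_gt0 n : (0 < n)%N -> (0 < 2 ^ n - 1)%N.
Proof. by move=> n_gt0; rewrite subn_gt0 -[1%N](expn0 2) ltn_exp2l. Qed.

Lemma uniform_coverage (R : realType) n :
  coverage (@uniform_policy R n) (n%:R / (2 ^ n - 1)%:R).
Proof.
move=> h _ u u_neq0 _; rewrite /uniform_policy.
set N := #|GL2 n|; set d := (2 ^ n - 1)%N.
have n_gt0 := vecF2_dim_gt0 u_neq0.
have d_gt0 : (0 < d)%N := exp2_sub1_gt0 n_gt0.
have fiberE i : #|col_fiber i u|%:R = N%:R / d%:R :> R.
  by rewrite /N /d -(card_col_fiber i u_neq0) natrM mulrAC divff ?mul1r // pnatr_eq0 -lt0n.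
apply: le_trans (_ : \sum_(A : GL2 n) N%:R^-1 * (u \in [set col i (val A) | i : 'I_n])%:R <= _).
  rewrite -mulr_sumr.
  under eq_bigr => A _ do rewrite -(sum_col_eq A u) natr_sum.
  rewrite exchange_big /=.
  under eq_bigr do rewrite -natr_sum -card_col_fiberE fiberE.
  rewrite sumr_const card_ord mulrnAr mulKf ?mulr_natl //.
  by rewrite pnatr_eq0 -lt0n card_GL2_gt0.
rewrite [leRHS]big_mkcond; apply: ler_sum => A _; rewrite Qset_cons inE.
by case: (u \in _) => /=; rewrite ?mulr1 ?mulr0 //; case: ifP; rewrite ?invr_ge0 ?ler0n.
Qed.

Lemma n_div_exp2_sub1_le1 (R : realType) n : n%:R / (2 ^ n - 1)%:R <= 1 :> R.
Proof.
have [->|n_gt0] := posnP n; first by rewrite mul0r ler01.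
rewrite ler_pdivrMr ?ltr0n ?exp2_sub1_gt0 // mul1r ler_nat.
by rewrite -ltnS subn1 prednK ?expn_gt0 // ltn_expl.
Qed.

Lemma exp2_sub1_div_le2 (R : realType) n : (2 ^ n - 1)%:R / (2 ^ n.-1)%:R <= 2 :> R.
Proof.
rewrite ler_pdivrMr ?ltr0n ?expn_gt0 // -natrM ler_nat.
by case: n => [|n] //=; rewrite expnS leq_subr.
Qed.

Lemma one_sub_expr_le_expR (R : realType) (x : R) t :
  x <= 1 -> (1 - x) ^+ t <= expR (- (x * t%:R)).
Proof.
move=> x_le1; rewrite -mulNr expRM_natr.
apply: lerXn2r; rewrite ?nnegrE ?subr_ge0 ?expR_ge0 //.
by have := expR_ge1Dx (- x); rewrite addrC.
Qed.

Lemma uniform_bound_le_expR (R : realType) (n t : nat) :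
  (2 ^ n - 1)%:R / (2 ^ n.-1)%:R * (1 - n%:R / (2 ^ n - 1)%:R) ^+ t
    <= 2 * expR (- ((n * t)%:R / (2 ^ n - 1)%:R)) :> R.
Proof.
have x_le1 := n_div_exp2_sub1_le1 R n.
apply: ler_pM; rewrite ?divr_ge0 ?ler0n ?exprn_ge0 ?subr_ge0 ?exp2_sub1_div_le2 //.
by rewrite natrM mulrAC; apply: one_sub_expr_le_expR.
Qed.

Theorem proposition7 (R : realType) (n : nat)
  (rho : 'M[R[i]]_(2 ^ n)) (g : 'I_n -> 'M[R[i]]_(2 ^ n)) :
  is_state rho -> stabilizer_generators g ->
  (* (i) *)
  (forall h : seq (GL2 n),
     width rho g (Qset h) <= Num.min 1 (2 * (mcount (Qset h))%:R / (2 ^ n)%:R)) /\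
  (* (ii) *)
  (forall (pol : policy R n) (alpha : R),
     is_policy pol -> 0 <= alpha <= 1 -> coverage pol alpha ->
     forall t : nat,
       expected_width pol rho g t
         <= (2 ^ n - 1)%:R / (2 ^ n.-1)%:R * (1 - alpha) ^+ t) /\
  (* (iii) *)
  (is_policy (@uniform_policy R n) /\
   coverage (@uniform_policy R n) (n%:R / (2 ^ n - 1)%:R) /\
   forall t : nat,
     expected_width (@uniform_policy R n) rho g t
       <= (2 ^ n - 1)%:R / (2 ^ n.-1)%:R * (1 - n%:R / (2 ^ n - 1)%:R) ^+ t /\
     (2 ^ n - 1)%:R / (2 ^ n.-1)%:R * (1 - n%:R / (2 ^ n - 1)%:R) ^+ t
       <= 2 * expR (- ((n * t)%:R / (2 ^ n - 1)%:R)) :> R).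
Proof.
move=> _ _; split; first by move=> h; apply: width_le.
split.
  move=> pol alpha pol_distr /andP[_ alpha_le1] pol_cov t.
  exact: expected_width_le.
split; first exact: uniform_is_policy.
split; first exact: uniform_coverage.
move=> t; split; last exact: uniform_bound_le_expR.
apply: expected_width_le; [exact: uniform_is_policy | exact: uniform_coverage |].
exact: n_div_exp2_sub1_le1.
Qed.
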